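(* For $n\ge 2$, let $\overline{\mathcal M}_{\neq}(n)$ be the number of MAU pairs $(u,v)$ of binary words with $|u|=|v|=n$ and $|u|_c\ne|v|_c$ for some $c\in\{a,b\}$. Then $$\overline{\mathcal M}_{\neq}(n)=2\sum_{r_2=0}^{n-2}\ \sum_{r_1=r_2+2}^{n}{}_{A}N_{O}^{B_{r_2}},$$ where, for each $(r_1,r_2)$, $A=(r_2-r_1,\,r_1-r_2)$, $O=(0,0)$ and $B_{r_2}=(r_2,\,n-r_2)$.
   Context: Let $\Sigma=\{a,b\}$. For a word $w$ and a letter $c$, $|w|_c$ denotes the number of occurrences of $c$ in $w$. Two words $x,y$ are abelian equivalent, written $x\sim_{\mathrm{abl}}y$, if $|x|_c=|y|_c$ for all $c\in\Sigma$. For words $u,v$: a pair $(x,y)$ is an internal abelian-border of $(u,v)$ if $x$ is a nonempty proper suffix of $u$, $y$ is a proper prefix of $v$, and $x\sim_{\mathrm{abl}}y$; it is an external abelian-border of $(u,v)$ if $x$ is a nonempty proper prefix of $u$, $y$ is a proper suffix of $v$, and $x\sim_{\mathrm{abl}}y$. The pair $(u,v)$ is mutually abelian-bordered (MAB) if it has both an internal and an external abelian-border, and mutually abelian-unbordered (MAU) if it has neither. A lattice path is a finite sequence of points of $\mathbb Z^2$ in which each consecutive difference is $(1,0)$ (an east step) or $(0,1)$ (a north step). The word $w(p)\in\Sigma^*$ of a lattice path $p$ records its steps in order, writing $a$ for an east step and $b$ for a north step; conversely, for a point $A\in\mathbb Z^2$ and a word $w$, $p_A(w)$ is the lattice path starting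 at $A$ whose word is $w$. For lattice paths $p,q$, $p\cap q$ denotes the set of lattice points lying on both. For distinct lattice points $A,B,C$, ${}_{A}\mathcal N_{B}^{C}$ is the set of triples $(p,q,p')$ where $p$ is a lattice path from $A$ to $C$, $q$ is a lattice path from $B$ to $C$, $p'=p_B(w(p))$, $p\cap q=\{C\}$ and $q\cap p'=\{B\}$; and ${}_{A}N_{B}^{C}=|{}_{A}\mathcal N_{B}^{C}|$. *)

From mathcomp Require Import all_boot all_order all_algebra.
Set Implicit Arguments. Unset Strict Implicit. Unset Printing Implicit Defensive.
Import GRing.Theory Num.Theory.

(* Alphabet {a,b}: letter a is [true], letter b is [false]. *)
Definition letter := bool.
Definition la : letter := true.
Definition lb : letter := false.
Definition word := seq letter.

Definition abel_eq (x y : word) : bool :=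
  all (fun c => count_mem c x == count_mem c y) [:: la; lb].

Definition has_internal_border (u v : word) : bool :=
  [exists i : 'I_(size u), [exists j : 'I_(size v),
     (0 < i)%N && abel_eq (drop (size u - i) u) (take j v)]].

Definition has_external_border (u v : word) : bool :=
  [exists i : 'I_(size u), [exists j : 'I_(size v),
     (0 < i)%N && abel_eq (take i u) (drop (size v - j) v)]].

Definition MAU (u v : word) : bool :=
  ~~ has_internal_border u v && ~~ has_external_border u v.

Definition Mbar_neq (n : nat) : nat :=
  #|[set uv : n.-tuple bool * n.-tuple bool |
      MAU uv.1 uv.2 && ~~ abel_eq uv.1 uv.2]|.

Definition point := (int * int)%type.
Definition step (P : point) (c : letter) : point :=
  if c then (P.1 + 1, P.2)%R else (P.1, P.2 + 1)%R.

Definition path_of (A : point) (w : word) : seq point := A :: scanl step A w.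

Definition meets_exactly (p q : seq point) (X : point) : bool :=
  (X \in p) && (X \in q) && all (fun Y => (Y \in q) ==> (Y == X)) p.

Definition plen (P Q : point) : nat := `|((Q.1 - P.1) + (Q.2 - P.2))%R|%N.

(* _A N_B^C : a lattice path p from A to C is p_A(w) for a word w (the path is
   determined by its start point and word), ending at C; similarly q = p_B(w2).
   p' = p_B(w(p)) is determined by p, so triples correspond to pairs (w, w2). *)
Definition Ncount (A B C : point) : nat :=
  #|[set pq : (plen A C).-tuple bool * (plen B C).-tuple bool |
      let p := path_of A pq.1 in
      let q := path_of B pq.2 in
      let p' := path_of B pq.1 in
      [&& last A p == C, last B q == C,
          meets_exactly p q C & meets_exactly q p' B]]|.

From mathcomp Require Import all_boot all_order all_algebra zify.
Set Implicit Arguments. Unset Strict Implicit. Unset Printing Implicit Defensive.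
Import GRing.Theory.

(* Reversing the second word turns a MAU pair (u, v) with |u|_a <> |v|_a into a pair
   (w, w2) = (u, rev v) whose suffixes of equal length, and whose nonempty prefixes of
   equal length, never contain the same number of a's ([apart]).  Let r1 = |w|_a and
   r2 = |w2|_a.  The paths p_A(w) and p_O(w2) both end at B_r2 = (r2, n - r2); their
   i-th points lie on the antidiagonal x + y = i, and coincide exactly when the suffixes
   of length n - i have the same number of a's.  Likewise the i-th points of p_O(w2) and
   p_O(w) coincide exactly when the prefixes of length i do.  Hence _A N_O^{B_r2} counts
   the apart pairs with r1 and r2 a's.  Swapping w and w2 halves the total to the pairs
   with r1 > r2, and r1 = r2 + 1 is impossible: the suffix counts of w would then stay
   above those of w2, so w ends in a and w2 in b, and the prefixes of length n - 1 would
   have equal counts. *)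

Local Notation acount := (count_mem true).

Lemma acount_bcount (s : word) : acount s + count_mem false s = size s.
Proof. by elim: s => //= -[] s IH /=; lia. Qed.

Lemma acount_take_drop i (s : word) : acount (take i s) + acount (drop i s) = acount s.
Proof. by rewrite -count_cat cat_take_drop. Qed.

Lemma acount_drop_nth i (s : word) : i < size s ->
  acount (drop i s) = nth false s i + acount (drop i.+1 s).
Proof. by move=> lt_is; rewrite (drop_nth false lt_is) /=; case: (nth false s i). Qed.

Lemma abel_eqE (x y : word) : abel_eq x y = (size x == size y) && (acount x == acount y).
Proof.
rewrite /abel_eq /la /lb /= andbT -(acount_bcount x) -(acount_bcount y).
apply/andP/andP => [[/eqP -> /eqP ->] // | [/eqP e /eqP ea]].
by move: e; rewrite ea => /addnI ->.
Qed.

Section Borders.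
Variables (n : nat) (u v : word).
Hypotheses (size_u : size u = n) (size_v : size v = n).

Lemma has_internal_borderE : has_internal_border u v =
  [exists i : 'I_n, (0 < i) && (acount (drop (n - i) u) == acount (drop (n - i) (rev v)))].
Proof.
rewrite /has_internal_border size_u size_v; apply: eq_existsb => i.
have le_in : i <= n := ltnW (ltn_ord i).
rewrite drop_rev size_v count_rev subKn //.
apply/existsP/andP => [[j /andP[-> /=]] | [i_gt0 e]].
  rewrite abel_eqE size_drop size_u subKn // size_takel ?size_v ?(ltnW (ltn_ord j)) //.
  by case/andP => /eqP <-.
exists i; rewrite i_gt0 abel_eqE size_drop size_u subKn // size_takel ?size_v //.
by rewrite eqxx.
Qed.

Lemma has_external_borderE : has_external_border u v =
  [exists i : 'I_n, (0 < i) && (acount (take i u) == acount (take i (rev v)))].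
Proof.
rewrite /has_external_border size_u size_v; apply: eq_existsb => i.
have le_in : i <= n := ltnW (ltn_ord i).
rewrite take_rev size_v count_rev.
apply/existsP/andP => [[j /andP[-> /=]] | [i_gt0 e]].
  rewrite abel_eqE size_drop size_v subKn ?(ltnW (ltn_ord j)) // size_takel ?size_u //.
  by case/andP => /eqP ->.
exists i; rewrite i_gt0 abel_eqE size_drop size_v subKn // size_takel ?size_u //.
by rewrite eqxx.
Qed.

End Borders.

Lemma forall_ord_recr n (P : pred nat) :
  [forall i : 'I_n.+1, P i] = [forall i : 'I_n, P i] && P n.
Proof.
apply/forallP/andP => [allP | [/forallP allP Pn] i].
  split; last exact: (allP ord_max).
  by apply/forallP => i; exact: (allP (widen_ord (leqnSn n) i)).
case: (ltnP i n) => [lt_in | ge_in]; first exact: (allP (Ordinal lt_in)).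
by have -> : i = n :> nat by have := ltn_ord i; lia.
Qed.

Lemma forall_ord_recl n (P : pred nat) :
  [forall i : 'I_n.+1, P i] = P 0 && [forall i : 'I_n, P i.+1].
Proof.
apply/forallP/andP => [allP | [P0 /forallP allP] i].
  by split; [exact: (allP ord0) | apply/forallP => i; exact: (allP (lift ord0 i))].
case: (posnP i) => [-> // | i_gt0].
have lt_pred_i : i.-1 < n by have := ltn_ord i; lia.
by have := allP (Ordinal lt_pred_i); rewrite /= prednK.
Qed.

Lemma forall_ord_compl n (P : pred nat) : 0 < n ->
  [forall i : 'I_n, P i] = P 0 && [forall i : 'I_n, (0 < i) ==> P (n - i)].
Proof.
move=> n_gt0; apply/forallP/andP => [allP | [P0 /forallP allP] i].
  split; first exact: (allP (Ordinal n_gt0)).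
  apply/forallP => i; apply/implyP => i_gt0.
  have lt_ni : n - i < n by lia.
  exact: (allP (Ordinal lt_ni)).
case: (posnP i) => [-> // | i_gt0].
have lt_in := ltn_ord i; have lt_ni : n - i < n by lia.
have /implyP := allP (Ordinal lt_ni); rewrite /= subKn ?(ltnW lt_in) //.
by apply; lia.
Qed.

Lemma forall_ord_succ n (P : pred nat) : 0 < n ->
  [forall i : 'I_n, P i.+1] = [forall i : 'I_n, (0 < i) ==> P i] && P n.
Proof.
case: n => // n _; rewrite (@forall_ord_recr n (fun i => P i.+1)).
by rewrite (@forall_ord_recl n (fun i => (0 < i) ==> P i)).
Qed.

Definition apart n (w w2 : word) : bool :=
  [forall i : 'I_n, acount (drop i w) != acount (drop i w2)] &&
  [forall i : 'I_n, acount (take i.+1 w) != acount (take i.+1 w2)].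

Lemma MAU_not_abelE n (u v : word) : 0 < n -> size u = n -> size v = n ->
  MAU u v && ~~ abel_eq u v = apart n u (rev v).
Proof.
move=> n_gt0 size_u size_v.
have abel_uv : abel_eq u v = (acount u == acount (rev v)).
  by rewrite abel_eqE size_u size_v eqxx count_rev.
rewrite /MAU /apart (has_internal_borderE size_u size_v) (has_external_borderE size_u size_v).
rewrite (forall_ord_compl (fun i => acount (drop i u) != acount (drop i (rev v))) n_gt0).
rewrite (forall_ord_succ (fun i => acount (take i u) != acount (take i (rev v))) n_gt0).
rewrite !take_oversize ?size_rev ?size_u ?size_v // abel_uv !negb_exists /= !drop0.
case: (acount u == acount (rev v)); rewrite /= ?andbF // !andbT.
by congr (_ && _); apply: eq_forallb => i; rewrite negb_and implybE.
Qed.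

Lemma apart_sym n : symmetric (apart n).
Proof. by move=> w w2; rewrite /apart; congr (_ && _); apply: eq_forallb => i; rewrite eq_sym. Qed.

Lemma apart_acount_neq n (w w2 : word) : 0 < n -> apart n w w2 -> acount w != acount w2.
Proof. by move=> n_gt0 /andP[/forallP/(_ (Ordinal n_gt0)) /=]; rewrite !drop0. Qed.

Lemma apart_acount_gap n (w w2 : word) : 1 < n -> size w = n -> size w2 = n ->
  apart n w w2 -> acount w != (acount w2).+1.
Proof.
move=> n_gt1 size_w size_w2 /andP[/forallP suffixes /forallP prefixes].
apply/eqP => acount_w.
(* the suffix counts change by at most one per letter and never meet *)
have suffix_lt i : i < n -> acount (drop i w2) < acount (drop i w).
  elim: i => [_ | i IH lt_in]; first by rewrite !drop0 acount_w.
  have le_in := ltnW lt_in; have /eqP := suffixes (Ordinal lt_in).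
  move: (IH le_in); rewrite (@acount_drop_nth i w) ?size_w // (@acount_drop_nth i w2) ?size_w2 //.
  by case: (nth false w i); case: (nth false w2 i) => /=; lia.
have lt_pred_n : n.-1 < n by lia.
have lt_pred2_n : n.-2 < n by lia.
have pred2K : n.-2.+1 = n.-1 by lia.
have := prefixes (Ordinal lt_pred2_n); rewrite /= pred2K.
have := suffix_lt _ lt_pred_n.
have := acount_bcount (drop n.-1 w).
have := acount_take_drop n.-1 w; have := acount_take_drop n.-1 w2.
rewrite size_drop size_w => /= take_drop_w2 take_drop_w size_last.
by move: acount_w => /= acount_w lt_last /eqP; lia.
Qed.

Lemma apart_acount_bounds n (w w2 : word) : 1 < n -> size w = n -> size w2 = n ->
  apart n w w2 -> acount w2 < acount w ->
  (acount w2 < n.-1) && ((acount w2).+2 <= acount w < n.+1).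
Proof.
move=> n_gt1 size_w size_w2 apart_w lt_w2w.
have /eqP := apart_acount_gap n_gt1 size_w size_w2 apart_w.
by have := acount_bcount w; rewrite size_w; lia.
Qed.

Lemma card_rel_halves (T : finType) (R : rel T) (f : T -> nat) :
  symmetric R -> (forall x y, R x y -> f x != f y) ->
  #|[set xy : T * T | R xy.1 xy.2]| =
  2 * #|[set xy : T * T | R xy.1 xy.2 && (f xy.2 < f xy.1)]|.
Proof.
move=> symR R_neq; rewrite -(cardsID [set xy : T * T | f xy.2 < f xy.1]) mul2n -addnn.
pose swap (xy : T * T) := (xy.2, xy.1).
have swap_inj : injective swap by apply: (can_inj (g := swap)) => -[].
congr (_ + _); first by apply: eq_card => xy; rewrite !inE.
rewrite -(card_preimset _ swap_inj); apply: eq_card => -[x y]; rewrite !inE /= symR.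
case Rxy: (R x y); rewrite ?andbF ?andbT // -leqNgt leq_eqVlt.
by rewrite eq_sym (negbTE (R_neq _ _ Rxy)).
Qed.

Lemma sum_nat_indicator m p k (b : pred nat) :
  \sum_(m <= i < p) ((i == k) && b i : nat) = (m <= k < p) && b k.
Proof.
transitivity (\sum_(m <= i < p | b i && (i == k)) 1).
  by rewrite [RHS]big_mkcond /=; apply: eq_bigr => i _; rewrite andbC; case: (_ && _).
by rewrite big_nat1_cond_eq; case: (_ && _).
Qed.

Lemma card_sum_fibers2 (T : finType) (P : pred T) (f g : T -> nat)
    (a b c : nat) (lo : nat -> nat) :
  (forall x, P x -> (a <= g x < b) && (lo (g x) <= f x < c)) ->
  #|[set x | P x]| =
  \sum_(a <= j < b) \sum_(lo j <= i < c) #|[set x | [&& f x == i, g x == j & P x]]|.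
Proof.
move=> fibers_in_range.
have cardE (Q : pred T) : #|[set x | Q x]| = \sum_x (Q x : nat).
  by rewrite -sum1dep_card big_mkcond /=; apply: eq_bigr => x _; case: (Q x).
under eq_bigr => j _ do under eq_bigr => i _ do rewrite cardE.
under eq_bigr => j _ do rewrite exchange_big.
rewrite exchange_big cardE; apply: eq_bigr => x _.
under eq_bigr => j _ do under eq_bigr => i _ do rewrite eq_sym.
under eq_bigr => j _ do rewrite sum_nat_indicator.
rewrite (eq_bigr (fun j => ((j == g x) && ((lo j <= f x < c) && P x) : nat))); last first.
  by move=> j _; rewrite andbCA (eq_sym j).
rewrite sum_nat_indicator; case Px: (P x); rewrite ?andbF ?andbT //.
by rewrite fibers_in_range.
Qed.

Lemma Mbar_neq_apart n : 0 < n ->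
  Mbar_neq n = #|[set uv : n.-tuple bool * n.-tuple bool | apart n uv.1 uv.2]|.
Proof.
move=> n_gt0; pose rev2 (uv : n.-tuple bool * n.-tuple bool) := (uv.1, [tuple of rev uv.2]).
have rev2_inj : injective rev2.
  by apply: (can_inj (g := rev2)) => -[u v]; congr (_, _); apply: val_inj; rewrite /= revK.
rewrite -(card_preimset _ rev2_inj); apply: eq_card => -[u v]; rewrite !inE /=.
by rewrite (MAU_not_abelE n_gt0) ?size_tuple.
Qed.

Definition path_point (A : point) (w : word) (i : nat) : point :=
  (A.1 + (acount (take i w))%:Z, A.2 + (count_mem false (take i w))%:Z)%R.

Lemma path_point0 (A : point) (w : word) : path_point A w 0 = A.
Proof. by case: A => x y; rewrite /path_point take0 /= !addr0. Qed.

Lemma path_point_cons (A : point) (c : letter) (w : word) i :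
  path_point A (c :: w) i.+1 = path_point (step A c) w i.
Proof.
case: A => x y; case: c; rewrite /path_point /step /=; congr (_, _);
  by rewrite ?add0n ?PoszD ?addrA // [(1 + _)%R]addrC addrA.
Qed.

Lemma path_of_cons (A : point) (c : letter) (w : word) :
  path_of A (c :: w) = A :: path_of (step A c) w.
Proof. by []. Qed.

Lemma path_ofE (A : point) (w : word) :
  path_of A w = [seq path_point A w i | i <- iota 0 (size w).+1].
Proof.
elim: w A => [|c w IH] A; first by rewrite /= path_point0.
rewrite path_of_cons.
have -> : iota 0 (size (c :: w)).+1 = 0 :: map (addn 1) (iota 0 (size w).+1).
  by rewrite -iotaDl.
rewrite IH map_cons -map_comp path_point0; congr (_ :: _).
by apply: eq_map => i /=; rewrite add1n path_point_cons.
Qed.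

Lemma last_path_of (X A : point) (w : word) : last X (path_of A w) = path_point A w (size w).
Proof.
elim: w X A => [|c w IH] X A; first by rewrite /= path_point0.
by rewrite path_of_cons last_cons IH path_point_cons.
Qed.

Lemma path_point_diag (A : point) (w : word) i : i <= size w ->
  ((path_point A w i).1 + (path_point A w i).2 = A.1 + A.2 + i%:Z)%R.
Proof. by move=> le_iw; have := acount_bcount (take i w); rewrite size_takel //= => ?; lia. Qed.

Lemma eq_point_diag (P Q : point) : (P.1 + P.2 = Q.1 + Q.2)%R -> (P == Q) = (P.1 == Q.1).
Proof.
case: P Q => [x y] [x' y'] /= same_diag; apply/eqP/eqP => [[] // | eq_x].
by congr (_, _); lia.
Qed.

Lemma all_common_path_of (A B X : point) (w w2 : word) n : size w = n -> size w2 = n ->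
  (A.1 + A.2 = B.1 + B.2)%R ->
  all (fun Y => (Y \in path_of B w2) ==> (Y == X)) (path_of A w) =
  [forall i : 'I_n.+1, (path_point A w i == path_point B w2 i) ==> (path_point A w i == X)].
Proof.
move=> size_w size_w2 same_diag; rewrite !path_ofE size_w size_w2 all_map.
have mem_iota0 k : (k \in iota 0 n.+1) = (k < n.+1) by rewrite mem_iota.
apply/allP/forallP => [common i | common i].
  have := common i; rewrite mem_iota0 ltn_ord => /(_ isT) /implyP common_i.
  by apply/implyP => /eqP eq_i; apply: common_i; rewrite eq_i map_f // mem_iota0 ltn_ord.
rewrite mem_iota0 => lt_i; apply/implyP => /mapP[j]; rewrite mem_iota0 => lt_j eq_ij.
have := @path_point_diag A w i; rewrite size_w => /(_ lt_i) diag_i.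
have := @path_point_diag B w2 j; rewrite size_w2 => /(_ lt_j) diag_j.
have eq_idx : i = j :> nat by rewrite eq_ij in diag_i; lia.
have /implyP := common (Ordinal lt_i); apply => /=.
by rewrite eq_ij eq_idx.
Qed.

Lemma mem_path_of_last (A : point) (w : word) : path_point A w (size w) \in path_of A w.
Proof. by rewrite -(last_path_of A) /path_of last_cons mem_last. Qed.

Lemma path_point_eq_index (A : point) (w : word) i j : i <= size w -> j <= size w ->
  (path_point A w i == path_point A w j) = (i == j).
Proof.
move=> le_iw le_jw; apply/eqP/eqP => [eq_ij | -> //].
by have := path_point_diag A le_iw; rewrite eq_ij path_point_diag //; lia.
Qed.

Lemma same_diag_path_point (A B : point) (w w2 : word) i : i <= size w -> i <= size w2 ->
  (A.1 + A.2 = B.1 + B.2)%R ->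
  (path_point A w i == path_point B w2 i) = ((path_point A w i).1 == (path_point B w2 i).1).
Proof.
move=> le_iw le_iw2 same_diag; apply: eq_point_diag.
by rewrite !path_point_diag // same_diag.
Qed.

Lemma meets_exactly_last (A B : point) (w w2 : word) n : size w = n -> size w2 = n ->
  (A.1 + A.2 = B.1 + B.2)%R -> path_point A w n = path_point B w2 n ->
  meets_exactly (path_of A w) (path_of B w2) (path_point A w n) =
  [forall i : 'I_n, (path_point A w i).1 != (path_point B w2 i).1].
Proof.
move=> size_w size_w2 same_diag meet_n.
have end_in_p : path_point A w n \in path_of A w by rewrite -size_w mem_path_of_last.
have end_in_q : path_point A w n \in path_of B w2 by rewrite meet_n -size_w2 mem_path_of_last.
rewrite /meets_exactly end_in_p end_in_q !andTb.
rewrite (all_common_path_of _ size_w size_w2 same_diag).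
rewrite (@forall_ord_recr n (fun i => (path_point A w i == path_point B w2 i) ==>
                                  (path_point A w i == path_point A w n))).
rewrite eqxx implybT andbT.
apply: eq_forallb => i; have le_in := ltnW (ltn_ord i).
rewrite path_point_eq_index ?size_w // (ltn_eqF (ltn_ord i)) implybF.
by rewrite same_diag_path_point ?size_w ?size_w2.
Qed.

Lemma meets_exactly_head (B : point) (w w2 : word) n : size w = n -> size w2 = n ->
  meets_exactly (path_of B w2) (path_of B w) B =
  [forall i : 'I_n, (path_point B w2 i.+1).1 != (path_point B w i.+1).1].
Proof.
move=> size_w size_w2; rewrite /meets_exactly !mem_head !andTb.
rewrite (all_common_path_of _ size_w2 size_w erefl).
rewrite (@forall_ord_recl n (fun i => (path_point B w2 i == path_point B w i) ==>
                                  (path_point B w2 i == B))).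
rewrite !path_point0 eqxx implybT andTb.
apply: eq_forallb => i; have lt_in := ltn_ord i.
have -> : (path_point B w2 i.+1 == B) = false.
  by rewrite -[X in _ == X](path_point0 B w2) path_point_eq_index ?size_w2.
by rewrite implybF same_diag_path_point ?size_w ?size_w2.
Qed.

Section LatticeCount.
Variables n r1 r2 : nat.
Local Notation A := (Posz r2 - Posz r1, Posz r1 - Posz r2)%R.
Local Notation O := (0, 0)%R.
Local Notation B_r2 := (Posz r2, Posz n - Posz r2)%R.

Lemma path_of_A_ends_at_B (w : word) : size w = n ->
  (last A (path_of A w) == B_r2) = (acount w == r1).
Proof.
move=> size_w; have := acount_bcount w.
rewrite last_path_of /path_point take_oversize // xpair_eqE size_w /= => acount_w.
by apply/andP/eqP => [[/eqP ? _] | ?]; [lia | split; apply/eqP; lia].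
Qed.

Lemma path_of_O_ends_at_B (w2 : word) : size w2 = n ->
  (last O (path_of O w2) == B_r2) = (acount w2 == r2).
Proof.
move=> size_w2; have := acount_bcount w2.
rewrite last_path_of /path_point take_oversize // xpair_eqE size_w2 /= => acount_w2.
by apply/andP/eqP => [[/eqP ? _] | ?]; [lia | split; apply/eqP; lia].
Qed.

Lemma lattice_conditionE (w w2 : word) : size w = n -> size w2 = n ->
  [&& last A (path_of A w) == B_r2, last O (path_of O w2) == B_r2,
      meets_exactly (path_of A w) (path_of O w2) B_r2 &
      meets_exactly (path_of O w2) (path_of O w) O] =
  [&& acount w == r1, acount w2 == r2 & apart n w w2].
Proof.
move=> size_w size_w2; rewrite (path_of_A_ends_at_B size_w) (path_of_O_ends_at_B size_w2).
case: (eqVneq (acount w) r1) => //= acount_w; case: (eqVneq (acount w2) r2) => //= acount_w2.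
have end_w : path_point A w n = B_r2.
  by have := path_of_A_ends_at_B size_w; rewrite last_path_of size_w acount_w eqxx => /eqP.
have end_w2 : path_point O w2 n = B_r2.
  by have := path_of_O_ends_at_B size_w2; rewrite last_path_of size_w2 acount_w2 eqxx => /eqP.
rewrite -{1}end_w meets_exactly_last // ?end_w ?end_w2 //; last by rewrite /=; lia.
rewrite (meets_exactly_head _ size_w size_w2) /apart; congr (_ && _); apply: eq_forallb => i.
  have := acount_take_drop i w; have := acount_take_drop i w2.
  by move: acount_w acount_w2; rewrite /= => *; congr negb; apply/eqP/eqP; lia.
by rewrite /= !add0r eqz_nat eq_sym.
Qed.

Lemma Ncount_apart :
  Ncount A O B_r2 = #|[set uv : n.-tuple bool * n.-tuple bool |
                     [&& acount uv.1 == r1, acount uv.2 == r2 & apart n uv.1 uv.2]]|.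
Proof.
rewrite /Ncount; have [-> ->] : plen A B_r2 = n /\ plen O B_r2 = n.
  by rewrite /plen /=; split; rewrite -[RHS]/(absz n); congr absz; lia.
by apply: eq_card => -[w w2]; rewrite !inE /= lattice_conditionE ?size_tuple.
Qed.

End LatticeCount.

Theorem mainTheorem12 (n : nat) (hn : (2 <= n)%N) :
  Mbar_neq n =
  (2 * \sum_(0 <= r2 < n.-1)
         \sum_(r2.+2 <= r1 < n.+1)
           Ncount ((Posz r2 - Posz r1)%R, (Posz r1 - Posz r2)%R) (0%R, 0%R)
                  (Posz r2, (Posz n - Posz r2)%R))%N.
Proof.
have n_gt0 : 0 < n by lia.
pose apart_tuples (x y : n.-tuple bool) := apart n x y.
have apart_tuples_sym : symmetric apart_tuples by move=> x y; apply: apart_sym.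
rewrite (Mbar_neq_apart n_gt0).
rewrite (@card_rel_halves _ apart_tuples (fun x => acount x) apart_tuples_sym); last first.
  by move=> x y; apply: apart_acount_neq.
pose T := (n.-tuple bool * n.-tuple bool)%type.
rewrite (@card_sum_fibers2 T _ (fun uv => acount uv.1) (fun uv => acount uv.2)
                           0 n.-1 n.+1 (fun r2 => r2.+2)); last first.
  by move=> [u v] /andP[apart_uv lt_vu]; apply: apart_acount_bounds; rewrite ?size_tuple.
congr (2 * _); apply: eq_big_nat => r2 _; apply: eq_big_nat => r1 /andP[le_r1 _].
rewrite Ncount_apart; apply: eq_card => -[u v]; rewrite !inE /=.
case: (eqVneq (acount u) r1) => //= ->; case: (eqVneq (acount v) r2) => //= ->.
by rewrite /apart_tuples andbC; case: (apart _ _ _) => //=; lia.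
Qed.
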